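(* Let $P\subset\mathcal O_W$ be a binomial ideal and let $\xi\in W$ be a point where $\mathrm{Eord}_\xi(P)=\theta>0$ is maximal. Let $Z=\bigcap_{i\in\mathcal I}\{x_i=0\}\subset\mathrm{Etop}(P)$, $\mathcal I\subseteq\{1,\dots,n\}$, and let $\pi:W'\to W$ be the blow-up along $Z$, with exceptional divisor $Y'$. Write the total transform as $P\mathcal O_{W'}=I(Y')^{\theta}\cdot P^{\vee}$ ($P^\vee$ the weak transform). Then $\mathrm{Eord}_\xi(P)\ge\mathrm{Eord}_{\xi'}(P^{\vee})$ for all $\xi'\in W'$ with $\pi(\xi')=\xi$.
   Context: $K$ is an algebraically closed field of arbitrary characteristic; $W=\mathrm{Spec}(K[x_1,\dots,x_s,y_1,\dots,y_{n-s}]_y)$ (localization at $y_1\cdots y_{n-s}$), $E\cap W=\{V(x_1),\dots,V(x_s)\}$. For $\xi$ let $\Lambda(\xi)=\{i:\xi\in V(x_i)\}$, $E^0_{\Lambda(\xi)}$ the stratum of points lying on $V(x_i)$ exactly for $i\in\Lambda(\xi)$ (ideal generated by these $x_i$), $\mathrm{Eord}_\xi(J)=\max\{m: J_\xi\subset(I(E^0_{\Lambda(\xi)})_\xi)^m\}$. $\mathrm{Etop}(P)$ is the set of points where $\mathrm{Eord}(P)$ attains its maximum. On $W'$ the $E$-order is taken with respect to $E'$, consisting of the strict transforms of the hypersurfaces of $E$ and $Y'$; in the chart where one divides by $x_j$ the coordinates are $x_j$, $x_i'=x_i/x_j$ ($i\in\mathcal I$, $i\ne j$) and the remaining variables. A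 binomial ideal is an ideal generated by elements $x^{\lambda}(1-\mu y^{\delta})$ or $x^{\nu}(y^{\gamma}x^{\alpha}-bx^{\beta})$ with $\lambda,\nu,\alpha,\beta\in\mathbb N^s$, $\gamma,\delta\in\mathbb Z^{n-s}$, $\mu,b\in K$, each $y^\gamma x^\alpha-bx^\beta$ without common factors and $0<|\alpha|\le|\beta|$. *)

From mathcomp Require Import all_boot all_algebra.
From mathcomp Require Import mpoly.
Set Implicit Arguments. Unset Strict Implicit. Unset Printing Implicit Defensive.
Import GRing.Theory.
Local Open Scope ring_scope.

(* Coordinates: the polynomial ring K[x_1..x_s, y_1..y_t] (t = n - s) is
   {mpoly K[s + t]};  x_i = 'X_(lshift t i), y_j = 'X_(rshift s j).
   O_W is its localization at y_1...y_t; ideals of O_W are represented by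
   ideals (or generating sets) of the polynomial ring, and points of W by
   prime ideals of the polynomial ring not containing y_1...y_t. *)
Notation PR K s t := {mpoly K[s + t]}.

Definition xv (K : closedFieldType) (s t : nat) (i : 'I_s) : PR K s t :=
  'X_(lshift t i).
Definition yv (K : closedFieldType) (s t : nat) (j : 'I_t) : PR K s t :=
  'X_(rshift s j).
Definition yprod (K : closedFieldType) (s t : nat) : PR K s t :=
  \prod_(j < t) yv K s j.

Definition xmon (K : closedFieldType) (s t : nat) (a : 'I_s -> nat) : PR K s t :=
  \prod_(i < s) xv K t i ^+ a i.
Definition ymon (K : closedFieldType) (s t : nat) (d : 'I_t -> nat) : PR K s t :=
  \prod_(j < t) yv K s j ^+ d j.

Definition genI (R : comNzRingType) (S : R -> Prop) : R -> Prop :=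
  fun f => exists (k : nat) (g c : 'I_k -> R),
    (forall i, S (g i)) /\ f = \sum_(i < k) c i * g i.

Definition powI (R : comNzRingType) (S : R -> Prop) (m : nat) : R -> Prop :=
  genI (fun f => exists g : 'I_m -> R,
          (forall i, genI S (g i)) /\ f = \prod_(i < m) g i).

Definition is_ideal (R : comNzRingType) (p : R -> Prop) : Prop :=
  p 0 /\ (forall a b, p a -> p b -> p (a + b)) /\ (forall r a, p a -> p (r * a)).

Definition is_prime (R : comNzRingType) (p : R -> Prop) : Prop :=
  is_ideal p /\ ~ p 1 /\ (forall a b, p (a * b) -> p a \/ p b).

Definition pointW (K : closedFieldType) (s t : nat) (p : PR K s t -> Prop) : Prop :=
  is_prime p /\ ~ p (yprod K s t).

Definition IE (K : closedFieldType) (s t : nat) (p : PR K s t -> Prop) :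
  PR K s t -> Prop :=
  genI (fun f => exists i : 'I_s, p (xv K t i) /\ f = xv K t i).

(* J_xi  is contained in  (I(E^0_{Lambda(xi)})_xi)^m  (in the local ring at xi),
   i.e.  Eord_xi(J) >= m. *)
Definition Eord_ge (K : closedFieldType) (s t : nat) (p : PR K s t -> Prop)
    (J : PR K s t -> Prop) (m : nat) : Prop :=
  forall f, J f -> exists g, ~ p g /\ powI (IE p) m (g * f).

Definition Eord_eq (K : closedFieldType) (s t : nat) (p : PR K s t -> Prop)
    (J : PR K s t -> Prop) (m : nat) : Prop :=
  Eord_ge p J m /\ ~ Eord_ge p J m.+1.

(* equality of the ideals generated in the localization at y_1...y_t *)
Definition yequiv (K : closedFieldType) (s t : nat) (A B : PR K s t -> Prop) : Prop :=
  (forall f, A f -> exists k, B (yprod K s t ^+ k * f)) /\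
  (forall f, B f -> exists k, A (yprod K s t ^+ k * f)).

(* binomial generators (up to units y-monomials, Laurent y-monomials y^delta
   being written y^d / y^e with d e in N^t):
   x^lambda (1 - mu y^delta)   ~  x^lambda (y^e - mu y^d)
   x^nu (y^gamma x^alpha - b x^beta)  ~  x^nu (y^d x^alpha - b y^e x^beta)
   with y^gamma x^alpha, b x^beta without common factors (no x_i divides both
   monomials) and 0 < |alpha| <= |beta|. *)
Definition binomial_gen (K : closedFieldType) (s t : nat) (f : PR K s t) : Prop :=
  (exists (lam : 'I_s -> nat) (d e : 'I_t -> nat) (mu : K),
     f = xmon K t lam * (ymon K s e - mu *: ymon K s d)) \/
  (exists (nu al be : 'I_s -> nat) (d e : 'I_t -> nat) (b : K),
     f = xmon K t nu * (ymon K s d * xmon K t al - b *: (ymon K s e * xmon K t be))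
     /\ (forall i, al i = 0%N \/ be i = 0%N)
     /\ (0 < \sum_(i < s) al i)%N
     /\ (\sum_(i < s) al i <= \sum_(i < s) be i)%N).

(* the ring map O_W -> O_{W'_j} of the j-th chart of the blow-up along
   Z = {x_i = 0, i in Iset}:  x_i |-> x_j x_i' (i in Iset, i <> j),
   all other variables fixed. *)
Definition chart_var (K : closedFieldType) (s t : nat) (Iset : {set 'I_s}) (j : 'I_s)
    (k : 'I_(s + t)) : PR K s t :=
  if [exists i in Iset, (i != j) && (k == lshift t i)]
  then xv K t j * 'X_k else 'X_k.

Definition chart_map (K : closedFieldType) (s t : nat) (Iset : {set 'I_s}) (j : 'I_s)
    (f : PR K s t) : PR K s t :=
  comp_mpoly [tuple chart_var K Iset j k | k < s + t] f.

(* Fix a point xi and let L be the set of i with x_i in xi. Then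
   Eord_xi(J) >= m iff every monomial of every f in J has L-weight
   (number of factors x_i, i in L, counted with multiplicity) at least m:
   localising does not matter because a g outside xi has a nonzero
   weight-0 part, and lowest-weight parts multiply in a domain.
   The chart map sends distinct monomials to distinct monomials, multiplying
   x^m by x_j^N(m), where N(m) counts the factors x_i, i in I - {j}.  If xi'
   lies over xi and e = [x_j in xi'], then the weight of the image of x^m at
   xi' is at most (1 + e) w(m), w the weight at xi.  If Eord_xi'(P^v) > theta,
   every monomial of the transform of f in P has weight at least
   e theta + theta + 1 at xi', so every monomial of f has weight > theta and
   Eord_xi(P) > theta.  Only Eord_xi(P) <= theta is used. *)
From mathcomp Require Import all_boot all_algebra.
From mathcomp Require Import mpoly boolp zify.
Set Implicit Arguments. Unset Strict Implicit.
Import GRing.Theory.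
Local Open Scope ring_scope.

Definition ord_glue (T : Type) k1 k2 (u : 'I_k1 -> T) (v : 'I_k2 -> T)
    (i : 'I_(k1 + k2)) : T :=
  match split i with inl a => u a | inr b => v b end.

Lemma ord_glue_lshift (T : Type) k1 k2 (u : 'I_k1 -> T) (v : 'I_k2 -> T) i :
  ord_glue u v (lshift k2 i) = u i.
Proof. by rewrite /ord_glue (unsplitK (inl _ i)). Qed.

Lemma ord_glue_rshift (T : Type) k1 k2 (u : 'I_k1 -> T) (v : 'I_k2 -> T) i :
  ord_glue u v (rshift k1 i) = v i.
Proof. by rewrite /ord_glue (unsplitK (inr _ i)). Qed.

Section IdealGeneration.
Variable R : comNzRingType.
Implicit Types (S : R -> Prop) (x y : R).

Lemma genI_ind S (Q : R -> Prop) x : Q 0 ->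
  (forall a b, Q a -> Q b -> Q (a + b)) -> (forall r g, S g -> Q (r * g)) ->
  genI S x -> Q x.
Proof.
move=> Q0 QD QM [k [g [c [Sg ->]]]].
by elim/big_rec: _ => // i y _ Qy; apply: QD => //; apply: QM.
Qed.

Lemma genI_gen S x : S x -> genI S x.
Proof.
by move=> Sx; exists 1%N, (fun=> x), (fun=> 1); rewrite big_ord1 mul1r.
Qed.

Lemma genI0 S : genI S 0.
Proof. by exists 0%N, (fun=> 0), (fun=> 0); split => [[]|]; rewrite ?big_ord0. Qed.

Lemma genID S x y : genI S x -> genI S y -> genI S (x + y).
Proof.
move=> [k1 [g1 [c1 [Sg1 ->]]]] [k2 [g2 [c2 [Sg2 ->]]]].
exists (k1 + k2)%N, (ord_glue g1 g2), (ord_glue c1 c2); split.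
  by move=> i; rewrite /ord_glue; case: (split i).
rewrite big_split_ord; congr (_ + _); apply: eq_bigr => i _.
  by rewrite !ord_glue_lshift.
by rewrite !ord_glue_rshift.
Qed.

Lemma genIMl S r x : genI S x -> genI S (r * x).
Proof.
move=> [k [g [c [Sg ->]]]]; exists k, g, (fun i => r * c i); split => //.
by rewrite mulr_sumr; apply: eq_bigr => i _; rewrite mulrA.
Qed.

Lemma powI0 S x : powI S 0 x.
Proof.
rewrite -[x]mulr1; apply/genIMl/genI_gen.
by exists (fun=> 0); split => [[]|]; rewrite ?big_ord0.
Qed.

Lemma powI1 S x : genI S x -> powI S 1 x.
Proof. by move=> Sx; apply: genI_gen; exists (fun=> x); rewrite big_ord1. Qed.

Lemma powIM S a b x y : powI S a x -> powI S b y -> powI S (a + b) (x * y).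
Proof.
move=> Sx Sy; move: Sx; apply: (@genI_ind _ (fun u => powI S (a + b) (u * y))).
- by rewrite mul0r; apply: genI0.
- by move=> u v Su Sv; rewrite mulrDl; apply: genID.
move=> r _ [g [Sg ->]]; rewrite -mulrA; apply: genIMl.
move: Sy; apply: (@genI_ind _ (fun v => powI S (a + b) (\prod_(i < a) g i * v))).
- by rewrite mulr0; apply: genI0.
- by move=> u v Su Sv; rewrite mulrDr; apply: genID.
move=> r' _ [g' [Sg' ->]]; rewrite mulrCA; apply/genIMl/genI_gen.
exists (ord_glue g g'); split; first by move=> i; rewrite /ord_glue; case: (split i).
by rewrite big_split_ord; congr (_ * _); apply: eq_bigr => i _;
  rewrite ?ord_glue_lshift ?ord_glue_rshift.
Qed.

Lemma powI_leq S a b x : (a <= b)%N -> powI S b x -> powI S a x.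
Proof.
move=> /subnKC <-; elim: (b - a)%N => [|c IHc]; first by rewrite addn0.
rewrite addnS => Sx; apply: IHc; move: Sx.
apply: (@genI_ind _ (powI S (a + c))); [exact: genI0 | by move=> *; apply: genID |].
move=> r _ [g [Sg ->]]; rewrite big_ord_recr /= [_ * g _]mulrC mulrA.
apply/genIMl/genI_gen.
by exists (fun i => g (widen_ord (leqnSn _) i)).
Qed.

End IdealGeneration.

Lemma prime_exprK (R : comNzRingType) (p : R -> Prop) x k :
  is_prime p -> p (x ^+ k) -> p x.
Proof.
move=> [_ [p1 pM]]; elim: k => [|k IHk]; first by rewrite expr0 => /p1.
by rewrite exprS => /pM [|/IHk].
Qed.

Lemma mcoeff_msupp_sum (K : nzRingType) n (p : {mpoly K[n]}) m0 :
  \sum_(m <- msupp p) p@_m * (m == m0)%:R = p@_m0.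
Proof.
have [m0p|] := boolP (m0 \in msupp p).
  rewrite (bigD1_seq m0) ?msupp_uniq //= eqxx mulr1 big1 ?addr0 //.
  by move=> m /negbTE ->; rewrite mulr0.
move=> m0p; rewrite big1_seq => [|m mp].
  by move: m0p; rewrite mcoeff_msupp negbK => /eqP.
by case: eqP mp => [-> /(negP m0p)|]; rewrite ?mulr0.
Qed.

Section WeightedOrder.
Variables (K : closedFieldType) (s t : nat) (L : pred 'I_s).
Local Notation R := {mpoly K[s + t]}.
Implicit Types (p q g : R) (m : 'X_{1..s + t}).

Definition wvar (k : 'I_(s + t)) : nat := [exists i, L i && (k == lshift t i)].

Definition mweight m : nat := (\sum_(k < s + t) wvar k * m k)%N.

(* The coefficient of 'X^d in [wpoly p] is the part of p of L-weight d. *)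
Fact wpoly_key : unit. Proof. exact: tt. Qed.
Definition wpoly p : {poly R} := locked_with wpoly_key
  (mmap (polyC \o @mpolyC (s + t) K) (fun k => ('X_k)%:P * 'X ^+ wvar k)) p.

Lemma wpolyD p q : wpoly (p + q) = wpoly p + wpoly q.
Proof. by rewrite /wpoly unlock rmorphD. Qed.

Lemma wpolyM p q : wpoly (p * q) = wpoly p * wpoly q.
Proof. by rewrite /wpoly unlock rmorphM. Qed.

Lemma wpolyX k : wpoly 'X_k = ('X_k)%:P * 'X ^+ wvar k.
Proof. by rewrite /wpoly unlock mmapX mmap1U. Qed.

Definition wt_ge p n := forall m, p@_m != 0 -> (n <= mweight m)%N.

Lemma wvar_lshift i : wvar (lshift t i) = L i.
Proof.
rewrite /wvar; case: (boolP (L i)) => Li.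
  by rewrite (_ : [exists _, _]) //; apply/existsP; exists i; rewrite Li eqxx.
rewrite (_ : [exists _, _] = false) //; apply/negbTE/existsP.
by case=> i' /andP[Li' /eqP/lshift_inj eii']; rewrite eii' Li' in Li.
Qed.

Lemma wvar_neq0 k : wvar k != 0%N -> exists2 i, L i & k = lshift t i.
Proof.
by rewrite /wvar; case: existsP => // -[i /andP[Li /eqP ->]] _; exists i.
Qed.

Lemma wpolyE p :
  wpoly p = \sum_(m <- msupp p) (p@_m *: 'X_[m])%:P * 'X ^+ mweight m.
Proof.
rewrite /wpoly unlock /mmap; apply: eq_bigr => m _ /=.
rewrite /mmap1 (eq_bigr (fun k => ('X_k ^+ m k)%:P * 'X ^+ (wvar k * m k))).
  by rewrite big_split /= prodrXr -rmorph_prod -mpolyXE_id -mul_mpolyC mulrA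
     -rmorphM.
by move=> k _; rewrite exprMn rmorphXn -exprM.
Qed.

Lemma coef_wpoly p d m0 :
  ((wpoly p)`_d)@_m0 = if mweight m0 == d then p@_m0 else 0.
Proof.
rewrite wpolyE coef_sum raddf_sum /=.
under eq_bigr => m _ do
  rewrite mul_polyC coefZ coefXn mulr_natr mcoeffMn mcoeffZ mcoeffX.
case: eqP => [<-|wd].
  rewrite -(mcoeff_msupp_sum p m0); apply: eq_bigr => m _.
  by case: (eqVneq m m0) => [->|_]; [rewrite eqxx mulr1n | rewrite mulr0 mul0rn].
rewrite big1_seq // => m _.
case: (eqVneq m m0) => [->|_]; last by rewrite mulr0 mul0rn.
by case: eqP => // /esym /wd.
Qed.

Lemma wt_geP p n : wt_ge p n <-> forall d, (d < n)%N -> (wpoly p)`_d = 0.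
Proof.
split=> [pn d dn | pn m].
  apply/mpolyP => m0; rewrite coef_wpoly mcoeff0.
  by case: eqP => // wd; apply/eqP; apply: contraTT dn => /pn; rewrite wd -leqNgt.
rewrite leqNgt; apply: contra_neqN => /pn /mpolyP /(_ m).
by rewrite coef_wpoly eqxx mcoeff0.
Qed.

Lemma wt_ge0 n : wt_ge 0 n.
Proof. by move=> m; rewrite mcoeff0 eqxx. Qed.

Lemma wt_geD p q n : wt_ge p n -> wt_ge q n -> wt_ge (p + q) n.
Proof.
move=> /wt_geP pn /wt_geP qn; apply/wt_geP => d dn.
by rewrite wpolyD coefD (pn d dn) (qn d dn) addr0.
Qed.

Lemma wt_geM p q a b : wt_ge p a -> wt_ge q b -> wt_ge (p * q) (a + b).
Proof.
move=> /wt_geP pa /wt_geP qb; apply/wt_geP => d dab.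
rewrite wpolyM coefM big1 // => i _.
have [ia|ai] := ltnP i a; first by rewrite pa ?mul0r.
by rewrite qb ?mulr0 //; move: (ltn_ord i); lia.
Qed.

Lemma wt_geMl r p n : wt_ge p n -> wt_ge (r * p) n.
Proof. by rewrite -[n]add0n; apply: wt_geM. Qed.

Lemma wt_geX k : wt_ge 'X_k (wvar k).
Proof.
apply/wt_geP => d dk; rewrite wpolyX coefCM coefXn.
by rewrite ltn_eqF ?mulr0.
Qed.

Lemma wt_geXn p a n : wt_ge p a -> wt_ge (p ^+ n) (n * a).
Proof.
by move=> pa; elim: n => [|n IHn] //; rewrite exprS mulSn; apply: wt_geM.
Qed.

Lemma wt_ge_prod n (g : 'I_n -> R) :
  (forall i, wt_ge (g i) 1) -> wt_ge (\prod_(i < n) g i) n.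
Proof.
elim: n g => [|n IHn] g g1; first by [].
rewrite big_ord_recr /= -[X in wt_ge _ X]addn1.
by apply: wt_geM (g1 ord_max); apply: IHn.
Qed.

Lemma wt_ge_cancel g p n : (wpoly g)`_0 != 0 -> wt_ge (g * p) n -> wt_ge p n.
Proof.
move=> g0 /wt_geP gpn; apply/wt_geP; elim/ltn_ind => d IHd dn.
move: (gpn d dn); rewrite wpolyM coefM big_ord_recl subn0 big1 ?addr0 => [|i _].
  by move/eqP; rewrite mulf_eq0 (negbTE g0) => /eqP.
by rewrite IHd ?mulr0 // lift0; move: (ltn_ord i) dn; lia.
Qed.

Lemma genI_wt_ge (S : R -> Prop) n p :
  (forall g, S g -> wt_ge g n) -> genI S p -> wt_ge p n.
Proof.
move=> Sn; apply: (@genI_ind _ _ (fun u => wt_ge u n)); first exact: wt_ge0.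
  by move=> a b; apply: wt_geD.
by move=> r g /Sn; apply: wt_geMl.
Qed.

Lemma powI_wt_ge (S : R -> Prop) n p :
  (forall g, S g -> wt_ge g 1) -> powI S n p -> wt_ge p n.
Proof.
move=> S1; apply: genI_wt_ge => _ [g [Sg ->]]; apply: wt_ge_prod => i.
exact: genI_wt_ge (Sg i).
Qed.

Section VariablesInIdeal.
Variable S : R -> Prop.
Hypothesis SL : forall i, L i -> S (xv K t i).

Lemma powI_mweight m : powI S (mweight m) 'X_[m].
Proof.
rewrite mpolyXE_id /mweight.
apply: (big_rec2 (fun a x => powI S a x)); first exact: powI0.
move=> k a x _ Sx; rewrite mulnC; apply: powIM => //.
have [->|/wvar_neq0 [i Li ->]] := eqVneq (wvar k) 0%N.
  by rewrite muln0; apply: powI0.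
rewrite wvar_lshift Li muln1.
elim: (m (lshift t i)) => [|c IHc]; first exact: powI0.
by rewrite exprS -add1n; apply: powIM => //; apply/powI1/genI_gen/SL.
Qed.

Lemma wt_ge_powI n p : wt_ge p n -> powI S n p.
Proof.
move=> pn; rewrite (mpolyE p) big_seq; elim/big_rec: _ => [|m x mp Sx].
  exact: genI0.
apply: genID => //; rewrite -mul_mpolyC; apply/genIMl/powI_leq/powI_mweight.
by apply: pn; rewrite -mcoeff_msupp.
Qed.

Lemma ideal_wpoly0 g : is_ideal S -> (wpoly g)`_0 = 0 -> S g.
Proof.
move=> [S0 [SD SM]] g0.
have g1 : wt_ge g 1 by apply/wt_geP => d; rewrite ltnS leqn0 => /eqP ->.
rewrite (mpolyE g) big_seq; elim/big_rec: _ => // m x mg Sx; apply: (SD) => //.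
rewrite -mul_mpolyC; apply: (SM).
move: (g1 m); rewrite -mcoeff_msupp => /(_ mg) wm.
have [k] : exists k, (wvar k * m k != 0)%N.
  apply/existsP; apply: contraTT wm; rewrite negb_exists => /forallP m0.
  rewrite -ltnNge ltnS leqn0; apply/eqP/big1 => k _; exact/eqP/negPn.
rewrite muln_eq0 negb_or => /andP[/wvar_neq0 [i Li ->] mi].
rewrite mpolyXE_id (bigD1 (lshift t i)) //= -(prednK (n := m (lshift t i))) ?lt0n //.
by rewrite exprS -mulrA mulrC; apply: SM; apply: SL.
Qed.

End VariablesInIdeal.

End WeightedOrder.

Section LocalWeight.
Variables (K : closedFieldType) (s t : nat) (p : PR K s t -> Prop).

Definition Lambda : pred 'I_s := fun i => `[< p (xv K t i) >].

Lemma LambdaP i : reflect (p (xv K t i)) (Lambda i).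
Proof. exact: asboolP. Qed.

Lemma wpoly_coef0_outside g : is_ideal p -> ~ p g -> (wpoly Lambda g)`_0 != 0.
Proof.
move=> p_ideal pg; apply/eqP => g0; apply: pg.
by apply: (ideal_wpoly0 _ p_ideal g0) => i /LambdaP.
Qed.

Lemma Eord_geP J m : pointW p -> Eord_ge p J m <-> forall f, J f -> wt_ge Lambda f m.
Proof.
move=> [[p_ideal [p1 _]] _]; split=> [pJm f Jf | Jm f Jf].
  have [g [gp gf]] := pJm f Jf.
  apply: wt_ge_cancel (wpoly_coef0_outside p_ideal gp) _.
  apply: powI_wt_ge gf => x; apply: genI_wt_ge => _ [i [pi ->]].
  by have := wt_geX Lambda (k := lshift t i); rewrite wvar_lshift (introT (LambdaP i)).
exists 1; split=> //; rewrite mul1r.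
by apply: wt_ge_powI (Jm f Jf) => i /LambdaP pi; apply: genI_gen; exists i.
Qed.

End LocalWeight.

Section BlowupChart.
Variables (K : closedFieldType) (s t : nat) (Iset : {set 'I_s}) (j : 'I_s).
Local Notation R := {mpoly K[s + t]}.
Implicit Types (m : 'X_{1..s + t}) (f : R) (k : 'I_(s + t)).

Definition chart_scaled (k : 'I_(s + t)) : bool :=
  [exists i in Iset, (i != j) && (k == lshift t i)].

Definition chart_deg m : nat := (\sum_(k < s + t) chart_scaled k * m k)%N.

Definition chart_mnm m : 'X_{1..s + t} := (m + U_(lshift t j) *+ chart_deg m)%MM.

Lemma chart_scaled_j : chart_scaled (lshift t j) = false.
Proof.
by apply/negbTE/existsP => -[i /and3P[_ + /eqP/lshift_inj ij]]; rewrite ij eqxx.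
Qed.

Lemma chart_mapX m : chart_map Iset j ('X_[m] : R) = 'X_[chart_mnm m].
Proof.
rewrite /chart_map comp_mpolyX.
under eq_bigr => k _ do rewrite tnth_mktuple /chart_var -/(chart_scaled k).
rewrite (eq_bigr (fun k => 'X_k ^+ m k * xv K t j ^+ (chart_scaled k * m k))).
  by rewrite big_split /= prodrXr mpolyXD mpolyXn -mpolyXE_id.
by move=> k _; case: (chart_scaled k); rewrite ?mul1n ?mul0n ?mulr1 // exprMn mulrC.
Qed.

Lemma chart_mnmE m k :
  chart_mnm m k = (m k + (lshift t j == k) * chart_deg m)%N.
Proof. by rewrite mnmDE mulmnE mnm1E. Qed.

Lemma chart_mnm_inj : injective chart_mnm.
Proof.
move=> m1 m2 E.
have Ek k : k != lshift t j -> m1 k = m2 k.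
  move=> kj; move/mnmP/(_ k): E; rewrite !chart_mnmE eq_sym (negbTE kj).
  by rewrite !addn0.
have Edeg : chart_deg m1 = chart_deg m2.
  apply: eq_bigr => k _; have [->|/Ek -> //] := eqVneq k (lshift t j).
  by rewrite chart_scaled_j.
apply/mnmP => k; have [->|/Ek //] := eqVneq k (lshift t j).
by move/mnmP/(_ (lshift t j)): E; rewrite !chart_mnmE Edeg => /addIn.
Qed.

Lemma mcoeff_chart_map f m : (chart_map Iset j f)@_(chart_mnm m) = f@_m.
Proof.
rewrite {1}/chart_map comp_mpolyEX raddf_sum /= -mcoeff_msupp_sum.
apply: eq_bigr => m' _; rewrite -/(chart_map Iset j 'X_[m']) chart_mapX.
by rewrite mcoeffZ mcoeffX (inj_eq chart_mnm_inj).
Qed.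

Lemma chart_map_xv i : chart_map Iset j (xv K t i) = chart_var K Iset j (lshift t i).
Proof. by rewrite /chart_map /xv comp_mpolyXU -tnth_nth tnth_mktuple. Qed.

Variables (xi xi' : PR K s t -> Prop).
Hypothesis xi'_point : pointW xi'.
Hypothesis xi'_over_xi : forall f, xi f <-> xi' (chart_map Iset j f).

Local Notation w := (mweight (Lambda xi)).
Local Notation w' := (mweight (Lambda xi')).
Local Notation e := (wvar (Lambda xi') (lshift t j)).

Lemma wvar_chart_le k : (wvar (Lambda xi') k <= wvar (Lambda xi) k)%N.
Proof.
have [->//|/wvar_neq0 [i /LambdaP xi'i ->]] := eqVneq (wvar (Lambda xi') k) 0%N.
rewrite !wvar_lshift; suff -> : Lambda xi i by apply: leq_b1.
apply/LambdaP/xi'_over_xi; rewrite chart_map_xv.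
rewrite /chart_var; case: ifP => // _.
by case: xi'_point => -[[_ [_ +]] _] _; apply.
Qed.

Lemma chart_scaled_le k : e != 0%N -> (chart_scaled k <= wvar (Lambda xi) k)%N.
Proof.
rewrite wvar_lshift eqb0 negbK => /LambdaP xi'j.
case: (boolP (chart_scaled k)) => // ck.
have /existsP [i /and3P[_ _ /eqP ki]] := ck; rewrite ki wvar_lshift.
suff -> : Lambda xi i by [].
apply/LambdaP/xi'_over_xi; rewrite chart_map_xv /chart_var -/(chart_scaled _) -ki ck.
by case: xi'_point => -[[_ [_ +]] _] _; rewrite mulrC; apply.
Qed.

Lemma mweight_chart_mnm m : (w' (chart_mnm m) <= w m + e * w m)%N.
Proof.
rewrite /mweight; under eq_bigr => k _ do rewrite chart_mnmE mulnDr.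
rewrite big_split /= leq_add //.
  by apply: leq_sum => k _; rewrite leq_mul2r wvar_chart_le orbT.
rewrite (bigD1 (lshift t j)) //= eqxx mul1n big1 => [|k]; last first.
  by rewrite eq_sym => /negbTE ->; rewrite mul0n muln0.
have [->//|e0] := eqVneq e 0%N.
rewrite addn0 leq_mul2l leq_sum ?orbT // => k _.
by rewrite leq_mul2r chart_scaled_le ?orbT.
Qed.

End BlowupChart.

Theorem mainTheorem13 (K : closedFieldType) (s t : nat)
    (S : PR K s t -> Prop) (xi : PR K s t -> Prop) (theta : nat)
    (Iset : {set 'I_s}) :
  (* P = ideal generated by binomial generators *)
  (forall f, S f -> binomial_gen f) ->
  (* xi is a point of W where Eord(P) = theta > 0 is maximal *)
  pointW xi ->
  (0 < theta)%N ->
  Eord_eq xi (genI S) theta ->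
  (forall eta m, pointW eta -> Eord_ge eta (genI S) m -> (m <= theta)%N) ->
  (* Z = {x_i = 0, i in Iset} is contained in Etop(P) *)
  (forall eta, pointW eta -> (forall i, i \in Iset -> eta (xv K t i)) ->
     Eord_eq eta (genI S) theta) ->
  (* for every chart j of the blow-up, every weak transform Pv on that chart
     (P O_{W'} = x_j^theta Pv there), and every point xi' of the chart over xi *)
  forall (j : 'I_s) (Pv : PR K s t -> Prop) (xi' : PR K s t -> Prop),
    j \in Iset ->
    yequiv (genI (fun g => exists f, genI S f /\ g = chart_map Iset j f))
           (genI (fun g => exists q, Pv q /\ g = xv K t j ^+ theta * q)) ->
    pointW xi' ->
    (forall f, xi f <-> xi' (chart_map Iset j f)) ->
    (* Eord_{xi'}(Pv) <= theta *)
    ~ Eord_ge xi' Pv theta.+1.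
Proof.
move=> _ xi_pt _ [_ not_gt] _ _ j Pv xi' _ [P_to_Pv _] xi'_pt over /Eord_geP Pv_gt.
apply/not_gt/(Eord_geP _ _ xi_pt) => f Pf m fm; rewrite leqNgt; apply/negP => wm.
set e := wvar (Lambda xi') (lshift t j).
have [k Pv_k] : exists k, genI (fun g => exists q, Pv q /\ g = xv K t j ^+ theta * q)
    (yprod K s t ^+ k * chart_map Iset j f).
  by apply: P_to_Pv; apply: genI_gen; exists f.
have yk_wt : wt_ge (Lambda xi') (yprod K s t ^+ k * chart_map Iset j f)
    (theta * e + theta.+1).
  apply: genI_wt_ge Pv_k => _ [q [Pvq ->]].
  by apply: wt_geM; [apply/wt_geXn/wt_geX | apply: Pv_gt xi'_pt q Pvq].
have /wt_ge_cancel /(_ yk_wt) : (wpoly (Lambda xi') (yprod K s t ^+ k))`_0 != 0.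
  case: xi'_pt => xi'_prime y_out; apply: wpoly_coef0_outside; first by case: xi'_prime.
  by move/(prime_exprK xi'_prime).
move=> /(_ (chart_mnm Iset j m)); rewrite mcoeff_chart_map => /(_ fm).
have := mweight_chart_mnm xi'_pt over m; rewrite -/e.
have : (e * mweight (Lambda xi) m <= e * theta)%N by rewrite leq_mul2l -ltnS wm orbT.
lia.
Qed.
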